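(* Let $n$ be a nonnegative integer and let $x,y$ be complex numbers such that no denominator below vanishes. Then \[ \sum_{k=0}^{n}(-1)^k\binom{n}{k}\frac{\binom{2x+k}{k}\binom{2y+k}{k}}{\binom{2x+n+k}{k}\binom{2x-2y+k}{k}} \frac{1+2x+2k}{1+2x+n+k}H_{k}(x) =\frac{1}{2}\frac{\binom{2x+n}{n}\binom{x-2y-1+n}{n}}{\binom{x+n}{n}\binom{2x-2y+n}{n}}\big\{H_n(x)-H_{n}(x-2y-1)\big\}. \]
   Context: For complex $z$ and a nonnegative integer $k$, $\binom{z}{k}=\frac{z(z-1)\cdots(z-k+1)}{k!}$ (with $\binom{z}{0}=1$). For complex $x$ and nonnegative integer $m$, $H_0(x)=0$ and $H_m(x)=\sum_{j=1}^m\frac{1}{x+j}$ for $m\ge1$. The parameters are assumed to be such that all denominators are nonzero. *)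

From HB Require Import structures.
From mathcomp Require Import all_boot all_order all_algebra.
From mathcomp Require Import complex reals.
Set Implicit Arguments. Unset Strict Implicit. Unset Printing Implicit Defensive.
Import Order.TTheory GRing.Theory Num.Theory.
Local Open Scope ring_scope.

Definition binom (F : fieldType) (z : F) (k : nat) : F :=
  (\prod_(i < k) (z - i%:R)) / (k`!)%:R.

Definition Hsum (F : fieldType) (m : nat) (x : F) : F :=
  \sum_(j < m) (x + (j.+1)%:R)^-1.

From HB Require Import structures.
From mathcomp Require Import all_boot all_order all_algebra.
From mathcomp Require Import complex reals.
From mathcomp Require Import ring.
Import Order.TTheory GRing.Theory Num.Theory.
Local Open Scope ring_scope.
Set Implicit Arguments.
Unset Strict Implicit.

(* Multiplied by (2x+n+1)_(n+1), the k-th summand of the theorem becomes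
   [wpterm n k] * H_k(x), where
     wpterm n k = (1+2x+2k) (-1)^k C(n,k) (2x+1)_k (2y+1)_k (2x+n+k+2)_(n-k)
                  / (2x-2y+1)_k.
   Creative telescoping, with the certificates [cert] and [certH], shows that
     S_n = sum_k wpterm n k   and
     T_n = sum_k wpterm n k (2 H_k(x) - H_n(x) + H_n(x-2y-1))
   both satisfy u_(n+1) = [wpratio n] * u_n.  As S_0 = 1 + 2x and T_0 = 0,
   S_n is the product of Pochhammer symbols [wpclosed n] and T_n = 0, that is
   sum_k wpterm n k H_k(x) = (H_n(x) - H_n(x-2y-1)) S_n / 2. *)

Section Rising.
Variable R : pzSemiRingType.
Implicit Types (z : R) (m p : nat).

Definition rising z m : R := \prod_(i < m) (z + i%:R).

Lemma rising0 z : rising z 0 = 1.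
Proof. by rewrite /rising big_ord0. Qed.

Lemma risingS z m : rising z m.+1 = rising z m * (z + m%:R).
Proof. by rewrite /rising big_ord_recr. Qed.

Lemma risingSl z m : rising z m.+1 = z * rising (z + 1) m.
Proof.
rewrite /rising big_ord_recl addr0; congr (_ * _); apply: eq_bigr => i _.
by rewrite /= -natr1 addrA [z + _ + _]addrAC.
Qed.

Lemma risingD z m p : rising z (m + p) = rising z m * rising (z + m%:R) p.
Proof.
elim: p => [|p IHp]; first by rewrite addn0 rising0 mulr1.
by rewrite addnS !risingS IHp natrD addrA mulrA.
Qed.

End Rising.

Lemma rising_neq0P (R : idomainType) (z : R) m :
  reflect (forall i, (i < m)%N -> z + i%:R != 0) (rising z m != 0).
Proof.
apply: (iffP (prodf_neq0 _ _)) => [nz i lt_im | nz i _]; last exact: nz.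
exact: (nz (Ordinal lt_im)).
Qed.

Lemma rising_succ_neq0 (R : idomainType) (z : R) m :
  (rising z m.+1 != 0) = (rising z m != 0) && (z + m%:R != 0).
Proof. by rewrite risingS mulf_eq0 negb_or. Qed.

Section Binomial.
Variable F : fieldType.
Implicit Types (z : F) (k : nat).

Lemma binom_rising z k : binom (z + k%:R) k = rising (z + 1) k / k`!%:R.
Proof.
rewrite /binom /rising; congr (_ / _).
rewrite (reindex_inj rev_ord_inj) /=; apply: eq_bigr => i _.
by rewrite natrB // -natr1; ring.
Qed.

Lemma binom_neq0_rising z k : binom (z + k%:R) k != 0 -> rising (z + 1) k != 0.
Proof. by rewrite binom_rising; apply: contraNneq => ->; rewrite mul0r. Qed.

End Binomial.

Lemma binom_nat (F : numFieldType) n k : binom (n%:R : F) k = 'C(n, k)%:R.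
Proof.
have [le_kn | lt_nk] := leqP k n; last first.
  by rewrite bin_small // /binom (bigD1 (Ordinal lt_nk)) //= subrr !mul0r.
have fact_neq0 : k`!%:R != 0 :> F by rewrite pnatr_eq0 -lt0n fact_gt0.
rewrite /binom -[RHS](mulfK fact_neq0) -natrM bin_ffact ffact_prod natr_prod.
by congr (_ / _); apply: eq_bigr => i _; rewrite natrB // ltnW // (leq_trans (ltn_ord i)).
Qed.

Lemma sum_recurrence_telescope (V : zmodType) (a b g : nat -> V) n :
    (forall k, (k <= n.+1)%N -> a k - b k = g k.+1 - g k) ->
    g 0%N = 0 -> g n.+2 = 0 -> b n.+1 = 0 ->
  \sum_(0 <= k < n.+2) a k = \sum_(0 <= k < n.+1) b k.
Proof.
move=> dab g0 gn bn; rewrite [RHS](_ : _ = \sum_(0 <= k < n.+2) b k); last first.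
  by rewrite [in RHS]big_nat_recr //= bn addr0.
by apply/eqP; rewrite -subr_eq0 -sumrB (telescope_sumr_eq g) ?gn ?g0 ?subrr.
Qed.

Section WellPoised.
Variables (F : numFieldType) (x y : F).
Implicit Types (m n k : nat).

Definition hcoef k : F :=
  (-1) ^+ k * rising (2 * x + 1) k * rising (2 * y + 1) k
  / rising (2 * x - 2 * y + 1) k.

Definition btail m k : F :=
  'C(m, k)%:R * rising (2 * x + m%:R + k%:R + 2) (m - k).

Definition hterm m k := hcoef k * btail m k.

Definition wpterm m k := (1 + 2 * x + 2 * k%:R) * hterm m k.

Definition hgap n := Hsum n x - Hsum n (x - 2 * y - 1).

Definition wpsum n := \sum_(0 <= k < n.+1) wpterm n k.

Definition wpsumH n := \sum_(0 <= k < n.+1) wpterm n k * (2 * Hsum k x - hgap n).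

Definition wpratio n :=
  (x - 2 * y + n%:R) / ((x + n%:R + 1) * (2 * x - 2 * y + n%:R + 1))
  * ((2 * x + 2 * n%:R + 2) * (2 * x + 2 * n%:R + 3)).

Definition wpclosed n :=
  rising (2 * x + 1) (n.*2).+1 * rising (x - 2 * y) n
  / (rising (x + 1) n * rising (2 * x - 2 * y + 1) n).

Definition cert n k :=
  - (k%:R * (2 * x - 2 * y + k%:R) * (2 * x + n%:R + k%:R + 2))
  / (n.+1%:R * (x + n%:R + 1) * (2 * x - 2 * y + n%:R + 1)) * hterm n.+1 k.

Definition certH n k :=
  cert n k * ((x + k%:R) * (2 * Hsum k x - hgap n + (x - 2 * y + n%:R)^-1) - 1).

Let natS_neq0 m : 1 + m%:R != 0 :> F.
Proof. by rewrite addrC natr1 pnatr_eq0. Qed.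

Lemma btail_out m k : (m < k)%N -> btail m k = 0.
Proof. by move=> lt_mk; rewrite /btail bin_small // mul0r. Qed.

Lemma hterm_out m k : (m < k)%N -> hterm m k = 0.
Proof. by move=> lt_mk; rewrite /hterm btail_out // mulr0. Qed.

Lemma hcoef_succ k : 2 * x - 2 * y + 1 + k%:R != 0 ->
  (2 * x - 2 * y + 1 + k%:R) * hcoef k.+1
  = - ((2 * x + 1 + k%:R) * (2 * y + 1 + k%:R)) * hcoef k.
Proof.
move=> nz; rewrite /hcoef !risingS exprS invfM.
(* Naming the inverse keeps [field] from requiring (2x-2y+1)_k != 0. *)
by set d := (rising _ k)^-1; field; exact: nz.
Qed.

Lemma btail_succ_index m k :
  (2 * x + m%:R + k%:R + 2) * btail m k.+1 = (m%:R - k%:R) / k.+1%:R * btail m k.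
Proof.
have k1_neq0 : k.+1%:R != 0 :> F by rewrite pnatr_eq0.
case: (ltngtP k m) => [lt_km | lt_mk | ->]; last 2 first.
- by rewrite !btail_out ?mulr0 // ltnW.
- by rewrite btail_out // subrr !mul0r mulr0.
have eC : 'C(m, k.+1)%:R = 'C(m, k)%:R * (m%:R - k%:R) / k.+1%:R :> F.
  by rewrite -natrB 1?ltnW // -natrM mulnC -mul_bin_left mulnC natrM mulfK.
have eR : rising (2 * x + m%:R + k%:R + 2) (m - k)
          = (2 * x + m%:R + k%:R + 2) * rising (2 * x + m%:R + k.+1%:R + 2) (m - k.+1).
  by rewrite -subnSK // risingSl; congr (_ * rising _ _); ring.
by rewrite /btail eC eR; ring.
Qed.

Lemma btail_succ_size n k :
  (2 * x + 2 * n%:R + 2) * (2 * x + 2 * n%:R + 3) * btail n k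
  = (n.+1%:R - k%:R) / n.+1%:R * (2 * x + n%:R + k%:R + 2) * btail n.+1 k.
Proof.
have n1_neq0 : n.+1%:R != 0 :> F by rewrite pnatr_eq0.
case: (ltngtP k n.+1) => [lt_kn1 | lt_n1k | ->]; last 2 first.
- by rewrite !btail_out ?mulr0 // ltnW.
- by rewrite btail_out // subrr !mul0r mulr0.
have le_kn : (k <= n)%N by rewrite -ltnS.
have eC : 'C(n, k)%:R = 'C(n.+1, k)%:R * (n.+1%:R - k%:R) / n.+1%:R :> F.
  by rewrite -natrB 1?ltnW // -natrM mulnC -mul_bin_down mulnC natrM mulfK.
have eR : (2 * x + 2 * n%:R + 2) * (2 * x + 2 * n%:R + 3)
          * rising (2 * x + n%:R + k%:R + 2) (n - k)
          = (2 * x + n%:R + k%:R + 2) * rising (2 * x + n.+1%:R + k%:R + 2) (n.+1 - k).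
  rewrite subSn // (_ : 2 * x + n.+1%:R + k%:R + 2 = 2 * x + n%:R + k%:R + 2 + 1); last by ring.
  by rewrite -risingSl !risingS -[(n - k).+1]addn1 natrD natrB //; ring.
by rewrite /btail eC mulrCA eR; ring.
Qed.

Lemma wpratio_wpterm n k :
  wpratio n * wpterm n k
  = (x - 2 * y + n%:R) * (n.+1%:R - k%:R) * (2 * x + n%:R + k%:R + 2)
    / (n.+1%:R * (x + n%:R + 1) * (2 * x - 2 * y + n%:R + 1)) * wpterm n.+1 k.
Proof.
rewrite /wpratio /wpterm /hterm.
transitivity ((x - 2 * y + n%:R) / ((x + n%:R + 1) * (2 * x - 2 * y + n%:R + 1))
  * (1 + 2 * x + 2 * k%:R) * hcoef k
  * ((2 * x + 2 * n%:R + 2) * (2 * x + 2 * n%:R + 3) * btail n k)); first by ring.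
by rewrite btail_succ_size !invfM; ring.
Qed.

Lemma HsumS k (z : F) : Hsum k.+1 z = Hsum k z + (z + k.+1%:R)^-1.
Proof. by rewrite /Hsum big_ord_recr. Qed.

Lemma hgapS n :
  hgap n.+1 = hgap n + (x + n%:R + 1)^-1 - (x - 2 * y + n%:R)^-1.
Proof.
rewrite /hgap !HsumS (_ : x + n.+1%:R = x + n%:R + 1); last by ring.
by rewrite (_ : x - 2 * y - 1 + n.+1%:R = x - 2 * y + n%:R); [ring | ring].
Qed.

Section Recurrence.
Variable n : nat.
Hypothesis rising_x_neq0 : rising (x + 1) n.+1 != 0.
Hypothesis rising_xy_neq0 : rising (2 * x - 2 * y + 1) n.+1 != 0.
Hypothesis xy_neq0 : x - 2 * y + n%:R != 0.

Let xn_neq0 : x + n%:R + 1 != 0.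
Proof. by rewrite addrAC; move/rising_neq0P: rising_x_neq0; apply. Qed.

Let xyn_neq0 : 2 * x - 2 * y + n%:R + 1 != 0.
Proof. by rewrite addrAC; move/rising_neq0P: rising_xy_neq0; apply. Qed.

Lemma cert_succ k :
  cert n k.+1 = (n.+1%:R - k%:R) * (2 * x + 1 + k%:R) * (2 * y + 1 + k%:R)
    / (n.+1%:R * (x + n%:R + 1) * (2 * x - 2 * y + n%:R + 1)) * hterm n.+1 k.
Proof.
case: (ltngtP k n.+1) => [lt_kn1 | lt_n1k | ->]; last 2 first.
- by rewrite /cert !hterm_out ?mulr0 // ltnW.
- by rewrite /cert hterm_out // subrr !mul0r mulr0.
rewrite /cert /hterm.
transitivity (- k.+1%:R / (n.+1%:R * (x + n%:R + 1) * (2 * x - 2 * y + n%:R + 1))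
  * ((2 * x - 2 * y + 1 + k%:R) * hcoef k.+1)
  * ((2 * x + n.+1%:R + k%:R + 2) * btail n.+1 k.+1)); first by ring.
rewrite hcoef_succ ?btail_succ_index; last by move/rising_neq0P: rising_xy_neq0; apply.
by field; rewrite xyn_neq0 xn_neq0 !natS_neq0.
Qed.

Lemma wpterm_telescope k :
  wpterm n.+1 k - wpratio n * wpterm n k
  = cert n k.+1 * (x + k.+1%:R) - cert n k * (x + k%:R).
Proof.
rewrite wpratio_wpterm cert_succ /cert /wpterm.
by field; rewrite xyn_neq0 xn_neq0 !natS_neq0 ?xy_neq0.
Qed.

Lemma cert_add k :
  cert n k + cert n k.+1
  = (x - 2 * y + n%:R)^-1 * (wpratio n * wpterm n k)
    - (x + n%:R + 1)^-1 * wpterm n.+1 k.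
Proof.
rewrite wpratio_wpterm cert_succ /cert /wpterm.
by field; rewrite xyn_neq0 xn_neq0 !natS_neq0 ?xy_neq0.
Qed.

Lemma certH_telescope k :
  wpterm n.+1 k * (2 * Hsum k x - hgap n.+1)
    - wpratio n * wpterm n k * (2 * Hsum k x - hgap n)
  = certH n k.+1 - certH n k.
Proof.
have cert_shift : cert n k.+1 * (x + k.+1%:R) / (x + k.+1%:R) = cert n k.+1.
  have [lt_kn1 | le_n1k] := ltnP k n.+1; last by rewrite /cert hterm_out ?mulr0 ?mul0r.
  apply: mulfK; rewrite (_ : x + k.+1%:R = x + 1 + k%:R); last by ring.
  by move/rising_neq0P: rising_x_neq0; apply.
rewrite /certH HsumS hgapS.
set a := wpterm n.+1 k; set b := wpratio n * wpterm n k.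
set c0 := cert n k; set c1 := cert n k.+1; set h := Hsum k x; set l := hgap n.
apply/eqP; rewrite -subr_eq0.
(* A linear combination of [wpterm_telescope], [cert_add] and [cert_shift]. *)
rewrite (_ : _ - _ = (a - b - (c1 * (x + k.+1%:R) - c0 * (x + k%:R)))
                     * (2 * h - l + (x - 2 * y + n%:R)^-1)
                   - (c0 + c1 - ((x - 2 * y + n%:R)^-1 * b - (x + n%:R + 1)^-1 * a))
                   - 2 * (c1 * (x + k.+1%:R) / (x + k.+1%:R) - c1)); last by ring.
rewrite wpterm_telescope cert_add cert_shift -/a -/b -/c0 -/c1.
by rewrite !subrr mul0r mulr0 !subr0.
Qed.

Lemma wpsum_rec : wpsum n.+1 = wpratio n * wpsum n.
Proof.
rewrite /wpsum mulr_sumr.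
apply: (sum_recurrence_telescope (g := fun k => cert n k * (x + k%:R))).
- by move=> k _; exact: wpterm_telescope.
- by rewrite /cert !mul0r oppr0 !mul0r.
- by rewrite /cert hterm_out ?mulr0 ?mul0r.
- by rewrite /wpterm hterm_out ?mulr0.
Qed.

Lemma wpsumH_rec : wpsumH n.+1 = wpratio n * wpsumH n.
Proof.
rewrite /wpsumH mulr_sumr; under [in RHS]eq_bigr do rewrite mulrA.
apply: (sum_recurrence_telescope (g := certH n)).
- by move=> k _; exact: certH_telescope.
- by rewrite /certH /cert !mul0r oppr0 !mul0r.
- by rewrite /certH /cert hterm_out ?mulr0 ?mul0r.
- by rewrite /wpterm hterm_out ?mulr0 ?mul0r.
Qed.

End Recurrence.

Lemma wpsum_closed n :
  rising (x + 1) n != 0 -> rising (2 * x - 2 * y + 1) n != 0 -> wpsum n = wpclosed n.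
Proof.
elim: n => [|n IHn] rX rD.
  rewrite /wpsum big_nat1 /wpterm /hterm /hcoef /btail /wpclosed.
  by rewrite bin0 double0 !risingS !rising0 !mulr1 invr1; ring.
move: (rX) (rD); rewrite !rising_succ_neq0 => /andP[rX' xn] /andP[rD' xyn].
rewrite wpsum_rec // IHn // /wpclosed /wpratio doubleS !risingS -addnn.
by field; rewrite xyn rD' xn rX'.
Qed.

Lemma wpsumH_eq0 n :
  rising (x + 1) n != 0 -> rising (2 * x - 2 * y + 1) n != 0 ->
  rising (x - 2 * y) n != 0 -> wpsumH n = 0.
Proof.
elim: n => [|n IHn] rX rD rZ.
  by rewrite /wpsumH big_nat1 /hgap /Hsum !big_ord0 subrr mulr0 subr0 mulr0.
move: (rX) (rD) (rZ); rewrite !rising_succ_neq0.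
move=> /andP[rX' _] /andP[rD' _] /andP[rZ' xyn].
by rewrite wpsumH_rec // IHn // mulr0.
Qed.

Lemma sum_wpterm_Hsum n :
  rising (x + 1) n != 0 -> rising (2 * x - 2 * y + 1) n != 0 ->
  rising (x - 2 * y) n != 0 ->
  \sum_(0 <= k < n.+1) wpterm n k * Hsum k x = 2^-1 * (hgap n * wpclosed n).
Proof.
move=> rX rD rZ; have := wpsumH_eq0 rX rD rZ.
rewrite -(wpsum_closed rX rD) /wpsumH /wpsum.
under eq_bigr do rewrite mulrBr mulrCA.
rewrite sumrB -mulr_sumr -mulr_suml [_ * hgap n]mulrC => /eqP.
rewrite subr_eq0 => /eqP <-.
by rewrite mulrA mulVf ?mul1r ?pnatr_eq0.
Qed.

Lemma summand_wpterm n k :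
  (k <= n)%N -> rising (2 * x + n%:R + 1) n.+1 != 0 ->
  rising (2 * x - 2 * y + 1) k != 0 ->
  (-1) ^+ k * binom n%:R k
    * ((binom (2 * x + k%:R) k * binom (2 * y + k%:R) k)
       / (binom (2 * x + n%:R + k%:R) k * binom (2 * x - 2 * y + k%:R) k))
    * ((1 + 2 * x + 2 * k%:R) / (1 + 2 * x + n%:R + k%:R))
  = wpterm n k / rising (2 * x + n%:R + 1) n.+1.
Proof.
move=> le_kn rW rD.
have [p def_n] : exists p, n = (k + p)%N by exists (n - k)%N; rewrite subnKC.
have fact_neq0 : k`!%:R != 0 :> F by rewrite pnatr_eq0 -lt0n fact_gt0.
have eW : rising (2 * x + n%:R + 1) n.+1
          = rising (2 * x + n%:R + 1) k * (1 + 2 * x + n%:R + k%:R)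
            * rising (2 * x + n%:R + k%:R + 2) p.
  have -> : n.+1 = (k + p.+1)%N by rewrite def_n addnS.
  rewrite risingD risingSl.
  by rewrite (_ : 2 * x + n%:R + 1 + k%:R + 1 = 2 * x + n%:R + k%:R + 2); ring.
move: rW; rewrite eW !mulf_eq0 !negb_or => /andP[/andP[rQ nk] rT].
rewrite binom_nat !binom_rising /wpterm /hterm /hcoef /btail.
rewrite (_ : (n - k)%N = p); last by rewrite def_n addKn.
by field; rewrite rT nk rQ rD fact_neq0.
Qed.

Lemma binom_ratio_wpclosed n :
  rising (2 * x + n%:R + 1) n.+1 != 0 -> rising (x + 1) n != 0 ->
  rising (2 * x - 2 * y + 1) n != 0 ->
  (binom (2 * x + n%:R) n * binom (x - 2 * y - 1 + n%:R) n)
    / (binom (x + n%:R) n * binom (2 * x - 2 * y + n%:R) n)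
  = wpclosed n / rising (2 * x + n%:R + 1) n.+1.
Proof.
move=> rW rX rD; have fact_neq0 : n`!%:R != 0 :> F by rewrite pnatr_eq0 -lt0n fact_gt0.
rewrite !binom_rising /wpclosed -addnn -addnS risingD.
rewrite (_ : x - 2 * y - 1 + 1 = x - 2 * y); last by ring.
rewrite (_ : 2 * x + 1 + n%:R = 2 * x + n%:R + 1); last by ring.
by field; rewrite rW rX rD fact_neq0.
Qed.

End WellPoised.

Theorem theorem5 (R : realType) (n : nat) (x y : R[i])
  (hA : forall k : nat, (k <= n)%N -> binom (2 * x + n%:R + k%:R) k != 0)
  (hB : forall k : nat, (k <= n)%N -> binom (2 * x - 2 * y + k%:R) k != 0)
  (hC : forall k : nat, (k <= n)%N -> 1 + 2 * x + n%:R + k%:R != 0)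
  (hD : forall j : nat, (1 <= j <= n)%N -> x + j%:R != 0)
  (hE : forall j : nat, (1 <= j <= n)%N -> x - 2 * y - 1 + j%:R != 0)
  (hF : binom (x + n%:R) n != 0) :
  \sum_(0 <= k < n.+1)
     (-1) ^+ k * (binom n%:R k)
     * ((binom (2 * x + k%:R) k * binom (2 * y + k%:R) k)
        / (binom (2 * x + n%:R + k%:R) k * binom (2 * x - 2 * y + k%:R) k))
     * ((1 + 2 * x + 2 * k%:R) / (1 + 2 * x + n%:R + k%:R))
     * Hsum k x
  = 2^-1 * ((binom (2 * x + n%:R) n * binom (x - 2 * y - 1 + n%:R) n)
            / (binom (x + n%:R) n * binom (2 * x - 2 * y + n%:R) n))
    * (Hsum n x - Hsum n (x - 2 * y - 1)).
Proof.
have rW : rising (2 * x + n%:R + 1) n.+1 != 0.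
  rewrite rising_succ_neq0 (binom_neq0_rising (hA n _)) //=.
  by rewrite (_ : 2 * x + n%:R + 1 + n%:R = 1 + 2 * x + n%:R + n%:R) ?hC //; ring.
have rX : rising (x + 1) n != 0 := binom_neq0_rising hF.
have rD k : (k <= n)%N -> rising (2 * x - 2 * y + 1) k != 0.
  by move=> le_kn; exact: binom_neq0_rising (hB k le_kn).
have rZ : rising (x - 2 * y) n != 0.
  apply/rising_neq0P => i lt_in.
  by rewrite (_ : x - 2 * y + i%:R = x - 2 * y - 1 + i.+1%:R) ?hE //; ring.
under eq_big_nat => k /andP[_ /ltnSE le_kn].
  by rewrite (summand_wpterm le_kn rW (rD k le_kn)) mulrAC; over.
rewrite -mulr_suml sum_wpterm_Hsum ?rD // binom_ratio_wpclosed ?rD //.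
by rewrite /hgap; ring.
Qed.
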